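(* In the setting of the context, assume $G_{xy}^{[1]}=1$, $G_x^{[1]}\neq1$ and $G_x/G_x^{[1]}\cong A_5$. Then $G_x\cong A_5\times A_4$ and $G_e\cong A_4\wr C_2$.
   Context: $\mathcal{A}=(G_x,G_e,G_{xy})$ is a finite, primitive amalgam of degree $(5,2)$ (no nontrivial subgroup of $G_{xy}$ normal in both $G_x$ and $G_e$; $|G_x:G_{xy}|=5$, $|G_e:G_{xy}|=2$), $G=G_x*_{G_{xy}}G_e$ acts on the coset graph (5-valent tree) $\Gamma$, $x$ is the vertex with stabiliser $G_x$, $y$ the neighbour with $G_e$ the setwise stabiliser of $\{x,y\}$ and $G_x\cap G_y=G_{xy}$. $G_z^{[1]}$ is the pointwise stabiliser of $z$ and its neighbours, $G_{xy}^{[1]}=G_x^{[1]}\cap G_y^{[1]}$. *)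

From mathcomp Require Import all_boot all_fingroup all_solvable.
Set Implicit Arguments.
Unset Strict Implicit.
Unset Printing Implicit Defensive.
Local Open Scope group_scope.

Notation A4 := ('Alt_('I_4)).
Notation A5 := ('Alt_('I_5)).

(* The (imprimitive permutational) wreath product A_4 wr C_2, acting on
   'I_4 * bool (two blocks 'I_4 * {false} and 'I_4 * {true} of size 4):
   p (i, c) = (a_c i, s c) with a_false, a_true in A_4 and s : {perm bool}
   (s ranges over C_2 = Sym(bool)). *)
Definition wreathA4C2 : {set {perm 'I_4 * bool}} :=
  [set p : {perm 'I_4 * bool} |
     [exists s : {perm bool}, exists a0 : {perm 'I_4}, exists a1 : {perm 'I_4},
        [&& a0 \in A4, a1 \in A4 &
            [forall ic : 'I_4 * bool,
               p ic == ((if ic.2 then a1 else a0) ic.1, s ic.2)]]]].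

From mathcomp Require Import all_boot all_fingroup all_solvable.
From mathcomp Require Import zify.
Set Implicit Arguments.
Unset Strict Implicit.
Unset Printing Implicit Defensive.
Local Open Scope group_scope.

(* Write K = G_x^[1] (the core of G_xy in G_x), K1 = f(K) <| G_xy and
   K2 = K1^t = G_y^[1] for t in G_e \ G_xy.  Since K1 :&: K2 = 1 the two
   commute.  Simplicity of G_x / K gives G_x = K * C_Gx(K) (otherwise K2 would
   lie in K1).  G_xy / K is a subgroup of order 12 of A_5, i.e. A_4, and a
   central-product argument in the centerless group G_xy / K1 ~ A_4 yields
   |K| = 12, whence G_xy = K1 \x K2 and K ~ A_4.  Then G_x = K \x C_Gx(K)
   with C_Gx(K) ~ G_x / K ~ A_5, and correcting t by an element of K1 gives
   an involution s with G_e = (K1 \x K1^s) ><| <[s]>, which is A_4 wr C_2. *)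

Lemma card_Alt4 : #|A4| = 12.
Proof. by apply/eqP; rewrite -(@eqn_pmul2l 2) // card_Alt card_ord. Qed.

Lemma card_Alt5 : #|A5| = 60.
Proof. by apply/eqP; rewrite -(@eqn_pmul2l 2) // card_Alt card_ord. Qed.

Definition cycle3 : {perm 'I_3} :=
  tperm ord0 (lift ord0 ord0) * tperm (lift ord0 ord0) ord_max.

Definition cycle3_off (k : 'I_4) : {perm 'I_4} := lift_perm k k cycle3.

Lemma cycle3_off_Alt k : cycle3_off k \in A4.
Proof. by rewrite Alt_even odd_lift_perm addbb odd_permM !odd_tperm. Qed.

Lemma cycle3_off_fix k j : (cycle3_off k j == j) = (j == k).
Proof.
have nofix (i : 'I_3) : cycle3 i != i by rewrite permM !permE; case: i => [[|[|[|]]]].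
case: (unliftP k j) => [j'|] ->; last by rewrite /cycle3_off lift_perm_id !eqxx.
rewrite /cycle3_off lift_perm_lift (inj_eq (@lift_inj _ k)) (negbTE (nofix j')).
by rewrite eq_sym (negbTE (neq_lift _ _)).
Qed.

(* A_4 is centerless: a central element commutes with the 3-cycle fixing k,
   hence fixes k, for every k. *)
Lemma center_Alt4 : 'Z(A4) = 1.
Proof.
apply/trivgP/subsetP=> z /centerP [_ cz]; rewrite inE.
apply/eqP/permP=> k; rewrite perm1.
have := cz _ (cycle3_off_Alt k); move/(congr1 (fun p : {perm 'I_4} => p k)).
rewrite !permM; have /eqP -> : cycle3_off k k == k by rewrite cycle3_off_fix.
by move/esym/eqP; rewrite eq_sym cycle3_off_fix => /eqP.
Qed.

Lemma center_isog_Alt4 (gT : finGroupType) (G : {group gT}) :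
  G \isog A4 -> 'Z(G) = 1.
Proof.
case/isogP=> g injg imG; apply/eqP; rewrite trivg_card1.
by rewrite -(card_injm injg (center_sub G)) injm_center // imG center_Alt4 cards1.
Qed.

Lemma Alt_transitive n : 2 < n -> [transitive 'Alt_('I_n), on setT | 'P].
Proof.
move=> n3; apply: (@ntransitive1 _ _ _ _ _ n.-2); first by case: n n3 => [|[|[|]]].
by have := Alt_trans ('I_n); rewrite card_ord.
Qed.

Lemma card_stab_Alt n (i : 'I_n) : 2 < n ->
  (n * #|'C_('Alt_('I_n))[i | 'P]|)%N = #|'Alt_('I_n)|.
Proof.
move=> n3; rewrite -(card_orbit_stab 'P [group of 'Alt_('I_n)] i).
by rewrite (atransP (Alt_transitive n3)) ?inE // cardsT card_ord.
Qed.

Lemma card_stab_Alt4 (i : 'I_4) : #|'C_A4[i | 'P]| = 3.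
Proof. by apply/eqP; rewrite -(@eqn_pmul2l 4) // card_stab_Alt // card_Alt4. Qed.

Lemma card_stab_Alt5 (i : 'I_5) : #|'C_A5[i | 'P]| = 12.
Proof. by apply/eqP; rewrite -(@eqn_pmul2l 5) // card_stab_Alt // card_Alt5. Qed.

Section PointStabiliser.
Variables (n : nat) (i : 'I_n.+1).

Definition liftm_fun (s : 'S_n) : 'S_n.+1 := lift_perm i i s.

Lemma liftm_morph : {in [set: 'S_n] &, {morph liftm_fun : x y / x * y}}.
Proof. by move=> x y _ _; rewrite /liftm_fun lift_permM. Qed.

Canonical liftm := Morphism liftm_morph.

Lemma injm_liftm : 'injm liftm.
Proof.
apply/subsetP=> s /mker; rewrite /= /liftm_fun => s1; rewrite inE.
apply/eqP/permP=> k; apply: (@lift_inj _ i).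
by rewrite -(lift_perm_lift i i) s1 !perm1.
Qed.

Lemma im_liftm_Alt : 1 < n ->
  liftm @* 'Alt_('I_n) = 'C_('Alt_('I_n.+1))[i | 'P].
Proof.
move=> n2; apply/eqP; rewrite eqEcard; apply/andP; split.
  apply/subsetP=> p /morphimP [s _ As ->].
  rewrite inE !Alt_even /= /liftm_fun odd_lift_perm addbb -Alt_even As /=.
  by apply/astab1P; rewrite /= /aperm lift_perm_id.
rewrite card_injm ?subsetT ?injm_liftm // -(leq_pmul2l (isT : 0 < 2)).
have n1 : 1 < n.+1 by apply: ltnW.
rewrite -(leq_pmul2l (ltn0Sn n)) mulnCA card_stab_Alt // card_Alt ?card_ord //.
by rewrite card_Alt ?card_ord.
Qed.

End PointStabiliser.

(* A subgroup of order 12 of A_5 is a point stabiliser, hence a copy of A_4. *)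
Section Order12SubgroupOfAlt5.
Variable H : {group 'S_5}.
Hypotheses (sHA : H \subset A5) (oH : #|H| = 12).

Lemma orbit_card_dvd (x : 'I_5) : #|orbit 'P H x| %| 12.
Proof. by rewrite -oH -(card_orbit_stab 'P H x) dvdn_mulr. Qed.

(* An orbit {x, b} of size 2 would give a stabiliser 'C_H[x] of order 6
   fixing both x and b, inside the order-3 two-point stabiliser of A_5. *)
Lemma orbit_card_neq2 (x : 'I_5) : #|orbit 'P H x| != 2.
Proof.
apply/negP=> /eqP O2.
have [b Eb] : exists b, orbit 'P H x :\ x = [set b].
  by apply/cards1P/eqP; move: O2; rewrite (cardsD1 x) orbit_refl; case.
have /setD1P [nbx Ob] : b \in orbit 'P H x :\ x by rewrite Eb set11.
have eqO : orbit 'P H x = [set x; b].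
  by rewrite -Eb setD1K ?orbit_refl.
have oCx : #|'C_H[x | 'P]| = 6.
  apply/eqP; rewrite -(@eqn_pmul2l 2) //.
  by rewrite -{1}O2 card_orbit_stab oH.
have [b' Eb'] : exists b', b = lift x b'.
  by case: (unliftP x b) => [b' ->|Ebx]; [exists b' | rewrite Ebx eqxx in nbx].
have Cx_fix_b w : w \in 'C_H[x | 'P] -> w b = b.
  case/setIP=> Hw /astab1P wx.
  have : w b \in orbit 'P H x by have /orbit_eqP <- := Ob; exact: mem_orbit.
  rewrite eqO => /set2P [wb|] //.
  by move: nbx; rewrite -(perm_inj (etrans wb (esym wx))) eqxx.
suff : 'C_H[x | 'P] \subset liftm x @* 'C_A4[b' | 'P].
  by move/subset_leq_card; rewrite oCx card_injm ?subsetT ?injm_liftm // card_stab_Alt4.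
apply/subsetP=> w Cw; have /setIP [Hw /astab1P wx] := Cw.
have : w \in 'C_A5[x | 'P] by rewrite inE (subsetP sHA) //; exact/astab1P.
rewrite -im_liftm_Alt // => /morphimP [s _ As ws].
apply/morphimP; exists s => //; rewrite inE As; apply/astab1P.
apply: (@lift_inj _ x); rewrite /= /aperm -(lift_perm_lift x x s b').
by rewrite -[lift_perm _ _ _]/(liftm x s) -ws -Eb' Cx_fix_b.
Qed.

(* Orbit sizes divide 12 and are not 2, so an orbit of size at most 2 is a
   fixed point; the complement of a non-trivial orbit has at most 2 points. *)
Lemma order12_fixes_point : exists i, H \subset 'C[i | 'P].
Proof.
have small x : #|orbit 'P H x| <= 2 -> exists i, H \subset 'C[i | 'P].
  move=> le2; exists x.
  have O1 : #|orbit 'P H x| = 1%N.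
    have pos : 0 < #|orbit 'P H x| by apply/card_gt0P; exists x; exact: orbit_refl.
    by move: (orbit_card_neq2 x) pos le2; case: #|_| => [|[|[|]]].
  apply/subsetP=> h Hh; apply/astab1P.
  by have := mem_orbit 'P x Hh; rewrite (card_orbit1 O1) => /set1P.
pose O := orbit 'P H ord0.
have [le2|gt2] := leqP #|O| 2; first exact: small le2.
have ltO : #|O| < 5.
  have le5 : #|O| <= 5 by have := max_card O; rewrite card_ord.
  rewrite ltn_neqAle le5 andbT.
  by apply: contraTneq (orbit_card_dvd ord0) => ->.
have [j Oj] : exists j, j \notin O.
  apply/existsP; rewrite -negb_forall; apply: contraTN ltO => /forallP allO.
  by rewrite -leqNgt -{1}(card_ord 5) subset_leq_card //; apply/subsetP=> y _.
apply: (small j).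
have sub : orbit 'P H j \subset ~: O.
  apply/subsetP=> y Oy; rewrite inE; apply: contra Oj => Oy0.
  by rewrite /O -(orbit_eqP Oy0) (orbit_eqP Oy) orbit_refl.
have := subset_leq_card sub; have := cardsC O; rewrite card_ord; lia.
Qed.

Lemma order12_sub_Alt5_isog : H \isog A4.
Proof.
have [i sHi] := order12_fixes_point.
have eH : H :=: 'C_A5[i | 'P].
  by apply/eqP; rewrite eqEcard subsetI sHA sHi oH card_stab_Alt5.
rewrite isog_sym eH -(im_liftm_Alt i) //.
exact: sub_isog (subsetT _) (injm_liftm i).
Qed.

End Order12SubgroupOfAlt5.

Lemma TI_normal_cents (gT : finGroupType) (G A B : {group gT}) :
  A <| G -> B <| G -> A :&: B = 1 -> A \subset 'C(B).
Proof.
move=> nA nB tiAB; apply/commG1P/trivgP; rewrite -tiAB; apply: commg_subI.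
  by rewrite subsetI subxx (subset_trans (normal_sub nA) (normal_norm nB)).
by rewrite subsetI subxx (subset_trans (normal_sub nB) (normal_norm nA)).
Qed.

(* Groups of order at most 4 are abelian, so a nontrivial centerless group
   has order at least 5. *)
Lemma centerless_card_ge5 (gT : finGroupType) (N : {group gT}) :
  'Z(N) = 1 -> N :!=: 1 -> 4 < #|N|.
Proof.
move=> ZN ntN; rewrite ltnNge; apply: contra ntN => le4.
suff /center_idP cN : abelian N by rewrite -cN ZN.
have := cardG_gt0 N; move: le4.
case oN: #|N| => [|[|[|[|[|]]]]] // _ _.
- by rewrite (card1_trivg oN) abelian1.
- by apply/cyclic_abelian/prime_cyclic; rewrite oN.
- by apply/cyclic_abelian/prime_cyclic; rewrite oN.
- by apply: (@card_p2group_abelian _ 2); rewrite ?oN.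
Qed.

(* In a centerless central product N * M the factors are centerless and
   intersect trivially: such elements would be central in N * M. *)
Lemma centerless_central_product (gT : finGroupType) (N M : {group gT}) :
  N \subset 'C(M) -> 'Z(N * M) = 1 -> [/\ N :&: M = 1, 'Z(N) = 1 & 'Z(M) = 1].
Proof.
move=> cNM ZNM; have cMN : M \subset 'C(N) by rewrite centsC.
have central (A : {set gT}) :
    A \subset N * M -> A \subset 'C(N) -> A \subset 'C(M) -> A \subset [1].
  by move=> sA cAN cAM; rewrite -ZNM subsetI sA centM subsetI cAN.
split; apply/trivgP/central.
- by rewrite subIset ?mulG_subl.
- by rewrite subIset // cMN orbT.
- by rewrite subIset // cNM.
- by rewrite (subset_trans (center_sub _)) ?mulG_subl.
- by rewrite subIset // subxx orbT.
- by rewrite (subset_trans (center_sub _)).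
- by rewrite (subset_trans (center_sub _)) ?mulG_subr.
- by rewrite (subset_trans (center_sub _)).
- by rewrite subIset // subxx orbT.
Qed.

Section Blocks.
Variable T : finType.

Definition blk_fun (c : bool) (p : {perm T}) (ic : T * bool) : T * bool :=
  (if ic.2 == c then p ic.1 else ic.1, ic.2).

Lemma blk_funK c p : cancel (blk_fun c p) (blk_fun c p^-1).
Proof. by case=> i b; rewrite /blk_fun /=; case: (b == c); rewrite ?permK. Qed.

Definition blk c p : {perm T * bool} := perm (can_inj (blk_funK c p)).

Lemma blkE c p ic : blk c p ic = (if ic.2 == c then p ic.1 else ic.1, ic.2).
Proof. by rewrite permE. Qed.

Lemma blkM c p q : blk c (p * q) = blk c p * blk c q.
Proof.
by apply/permP=> [[i b]]; rewrite permM !blkE /=; case: (b == c); rewrite ?permM.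
Qed.

Lemma blk1 c : blk c 1 = 1.
Proof. by apply/permP=> [[i b]]; rewrite blkE !perm1 /=; case: (b == c). Qed.

Lemma blk_inj c : injective (blk c).
Proof.
move=> p q e; apply/permP=> i.
by have := congr1 (fun r : {perm _} => r (i, c)) e; rewrite !blkE /= eqxx => -[].
Qed.

Lemma blk_comm p q : commute (blk false p) (blk true q).
Proof. by apply/permP=> [[i b]]; rewrite !permM !blkE /=; case: b. Qed.

Lemma blk_TI p q : blk false p = blk true q -> p = 1.
Proof.
move=> e; apply/permP=> i; have := congr1 (fun r : {perm _} => r (i, false)) e.
by rewrite !blkE /= perm1 => -[].
Qed.

Definition sw_fun (ic : T * bool) : T * bool := (ic.1, ~~ ic.2).

Lemma sw_funK : involutive sw_fun.
Proof. by case=> i b; rewrite /sw_fun /= negbK. Qed.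

Definition sw : {perm T * bool} := perm (inv_inj sw_funK).

Lemma swE ic : sw ic = (ic.1, ~~ ic.2).
Proof. by rewrite permE. Qed.

Lemma swV : sw^-1 = sw.
Proof.
apply/eqP; rewrite eq_invg_mul.
by apply/eqP/permP=> [[i b]]; rewrite permM !swE perm1 /= negbK.
Qed.

Lemma order_sw (i0 : T) : #[sw] = 2.
Proof.
have : #[sw] %| 2 by rewrite order_dvdn expg2 -{1}swV mulVg.
rewrite dvdn_divisors // !inE => /orP [] /eqP // /eqP; rewrite order_eq1.
move/eqP/(congr1 (fun q : {perm _} => q (i0, false))).
by rewrite swE perm1.
Qed.

Lemma blkJ c p : blk c p ^ sw = blk (~~ c) p.
Proof.
apply/permP=> [[i b]]; rewrite conjgE swV !permM swE blkE swE !blkE /=.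
by case: b; case: c.
Qed.

Lemma blk_swap p q : (blk false p * blk true q) ^ sw = blk false q * blk true p.
Proof. by rewrite conjMg !blkJ blk_comm. Qed.

Lemma sw_notin_blocks (i0 : T) p q : sw != blk false p * blk true q.
Proof.
apply/eqP=> /(congr1 (fun r : {perm _} => (r (i0, false)).2)).
by rewrite swE permM !blkE.
Qed.

End Blocks.

Arguments sw {T}.

Lemma mem_wreathA4C2 (a0 a1 : {perm 'I_4}) (b : bool) : a0 \in A4 -> a1 \in A4 ->
  blk false a0 * blk true a1 * (if b then sw else 1) \in wreathA4C2.
Proof.
move=> A0 A1; rewrite inE; apply/existsP.
exists (if b then perm (inv_inj negbK) else 1); apply/existsP; exists a0.
apply/existsP; exists a1; rewrite A0 A1; apply/forallP=> [[i c]].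
by case: b; rewrite !permM !blkE ?swE ?permE ?perm1 /=; case: c.
Qed.

Lemma wreathA4C2P p : p \in wreathA4C2 -> exists a0 a1 (b : bool),
  [/\ a0 \in A4, a1 \in A4 & p = blk false a0 * blk true a1 * (if b then sw else 1)].
Proof.
rewrite inE => /existsP [sb /existsP [a0 /existsP [a1 /and3P [A0 A1 /forallP E]]]].
exists a0, a1, (sb false); split=> //.
have sbt : sb true = ~~ sb false.
  have : sb true != sb false by rewrite (inj_eq perm_inj).
  by case: (sb true); case: (sb false).
apply/permP=> [[i c]]; rewrite (eqP (E (i, c))) !permM !blkE /=.
by case: c; rewrite /= ?sbt; case: (sb false); rewrite ?swE ?perm1.
Qed.

(* Recognition of A_4 wr C_2: if G = (K1 \x K2) ><| <[s]> where the
   involution s swaps K1 and K2, and psi : K1 -> A_4 is an isomorphism,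
   then x1 * x2 * s^b |-> blk false (psi x1) * blk true (psi (x2 ^ s)) * sw^b
   is an isomorphism from G onto A_4 wr C_2. *)
Section WreathRecognition.
Variables (gT : finGroupType) (G B K1 K2 : {group gT}) (s : gT).
Hypotheses (dB : K1 \x K2 = B) (dG : B ><| <[s]> = G) (os : #[s] = 2).
Hypothesis K1s : K1 :^ s = K2.
Variable psi : {morphism K1 >-> {perm 'I_4}}.
Hypotheses (injpsi : 'injm psi) (impsi : psi @* K1 = A4).

Lemma conjg_s2 x : (x ^ s) ^ s = x.
Proof. by rewrite -conjgM -expg2 -os expg_order conjg1. Qed.

Lemma memJ_K1 x : x \in K1 -> x ^ s \in K2.
Proof. by rewrite -K1s memJ_conjg. Qed.

Lemma memJ_K2 x : x \in K2 -> x ^ s \in K1.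
Proof. by rewrite -K1s => /imsetP [y Ky ->]; rewrite conjg_s2. Qed.

Lemma psi_Alt4 x : x \in K1 -> psi x \in A4.
Proof. by move=> Kx; rewrite -impsi mem_morphim. Qed.

Definition phi1 x := blk false (psi x).
Definition phi2 x := blk true (psi (x ^ s)).

Lemma phi1M : {in K1 &, {morph phi1 : x y / x * y}}.
Proof. by move=> x y Kx Ky; rewrite /phi1 morphM // blkM. Qed.

Lemma phi2M : {in K2 &, {morph phi2 : x y / x * y}}.
Proof. by move=> x y Kx Ky; rewrite /phi2 conjMg morphM ?memJ_K2 // blkM. Qed.

Canonical phi1_morphism := Morphism phi1M.
Canonical phi2_morphism := Morphism phi2M.

Lemma phi_cent : phi2 @* K2 \subset 'C(phi1 @* K1).
Proof.
apply/subsetP=> y /morphimP [b _ Kb ->]; apply/centP=> z /morphimP [a _ Ka ->].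
exact: esym (blk_comm _ _).
Qed.

Let phiB := dprodm dB phi_cent.

Lemma order_sw_dvd : #[@sw 'I_4] %| #[s].
Proof. by rewrite os (order_sw ord0). Qed.

Let phiS := eltm order_sw_dvd.

(* Conjugation by s swaps the factors, as conjugation by sw swaps blocks. *)
Lemma phi_act : {in B & <[s]>, morph_act 'J 'J phiB phiS}.
Proof.
move=> x y Bx; rewrite cycle2g // => /set2P [] -> /=.
  by rewrite /phiS morph1 !conjg1.
have [a [b [Ka Kb -> _]]] := mem_dprod dB Bx.
rewrite /phiS eltm_id conjMg.
have -> : a ^ s * b ^ s = b ^ s * a ^ s.
  have [_ _ cK21 _] := dprodP dB.
  by apply: (centsP cK21); rewrite ?memJ_K2 ?memJ_K1.
rewrite /phiB !dprodmE ?memJ_K2 ?memJ_K1 //= /phi1 /phi2.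
by rewrite conjg_s2; apply: esym (blk_swap _ _).
Qed.

Let Phi := sdprodm dG phi_act.

Lemma injm_Phi : 'injm Phi.
Proof.
rewrite injm_sdprodm; apply/and3P; split.
- rewrite injm_dprodm; apply/and3P; split.
  + by apply/injmP=> x y Kx Ky /blk_inj; apply: (injmP injpsi).
  + apply/injmP=> x y Kx Ky /blk_inj /(injmP injpsi).
    by rewrite !memJ_K2 // => /(_ isT isT) /conjg_inj.
  + apply/eqP/trivgP/subsetP=> z /setIP [/morphimP [a _ Ka ->] /morphimP [b _ Kb e]].
    by rewrite /= /phi1 (blk_TI e) blk1 group1.
- by rewrite injm_eltm os (order_sw ord0).
rewrite im_eltm setIC prime_TIg ?cycle_subG //; first by rewrite [#|_|](order_sw ord0).
change (sw \notin dprodm dB phi_cent @* B); rewrite im_dprodm.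
apply/negP=> /mulsgP [u v /morphimP [a _ Ka ->]].
case/morphimP=> b _ Kb -> e.
by move: (sw_notin_blocks ord0 (psi a) (psi (b ^ s))); rewrite e eqxx.
Qed.

Lemma im_Phi : Phi @* G = wreathA4C2.
Proof.
rewrite im_sdprodm im_eltm /phiB im_dprodm; apply/setP=> p; apply/idP/idP.
  case/mulsgP=> xy z /mulsgP [x y /morphimP [a _ Ka ->] /morphimP [b _ Kb ->] ->].
  rewrite cycle2g ?(order_sw ord0) // => /set2P [] -> ->.
    by apply: (mem_wreathA4C2 false); rewrite ?psi_Alt4 ?memJ_K2.
  by apply: (mem_wreathA4C2 true); rewrite ?psi_Alt4 ?memJ_K2.
case/wreathA4C2P=> a0 [a1 [b [A0 A1 ->]]].
move: A0 A1; rewrite -impsi => /morphimP [a _ Ka ->] /morphimP [a' _ Ka' ->].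
apply: mem_mulg; first apply: mem_mulg.
- exact: (mem_morphim phi1_morphism).
- have := mem_morphim phi2_morphism (memJ_K1 Ka') (memJ_K1 Ka').
  by rewrite /= /phi2 conjg_s2.
- by case: b; rewrite ?cycle_id ?group1.
Qed.

End WreathRecognition.

Lemma wreath_recognition (gT : finGroupType) (G B K1 K2 : {group gT}) (s : gT) :
    K1 \x K2 = B -> B ><| <[s]> = G -> #[s] = 2 -> K1 :^ s = K2 ->
  K1 \isog A4 -> G \isog wreathA4C2.
Proof.
move=> dB dG os K1s /isogP [psi injpsi impsi].
rewrite -(im_Phi dB dG os K1s impsi).
exact: sub_isog (subxx _) (injm_Phi dB dG os K1s injpsi).
Qed.

Lemma index2_sqr_mem (gT : finGroupType) (G B : {group gT}) x :
  B \subset G -> #|G : B| = 2 -> x \in G -> x ^+ 2 \in B.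
Proof.
move=> sBG iB Gx; have nBG := normal_norm (index2_normal sBG iB).
have xN : x \in 'N(B) := subsetP nBG x Gx.
apply: (coset_idr (groupX 2 xN)); rewrite morphX //; apply/eqP; rewrite -order_dvdn.
by rewrite -iB -card_quotient //; apply: order_dvdG; exact: mem_quotient.
Qed.

Lemma index2_sdprod (gT : finGroupType) (G B : {group gT}) s :
    B \subset G -> #|G : B| = 2 -> s \in G :\: B -> s * s = 1 ->
  #[s] = 2 /\ B ><| <[s]> = G.
Proof.
move=> sBG iB /setDP [Gs nBs] ss.
have os : #[s] = 2.
  have : #[s] %| 2 by rewrite order_dvdn expg2 ss.
  rewrite dvdn_divisors // !inE => /orP [] /eqP o1 //.
  by move: nBs; rewrite (_ : s = 1) ?group1 //; apply/eqP; rewrite -order_eq1 o1.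
have tiBs : B :&: <[s]> = 1 by rewrite setIC prime_TIg ?cycle_subG // [#|_|]os.
have nBs' : s \in 'N(B) := subsetP (normal_norm (index2_normal sBG iB)) s Gs.
split=> //; rewrite sdprodE ?cycle_subG //.
apply/eqP; rewrite eqEcard mul_subG ?cycle_subG //= TI_cardMg //.
by rewrite -(Lagrange sBG) iB [#|<[s]>|]os.
Qed.

(* If K <| B, B has index 2 in G, and B = K \x K^t for some t in G \ B, then
   t can be corrected by an element of K into an involution s with
   K^s = K^t: writing t^2 = a b with a in K, b in K^t, the fact that t
   centralises t^2 forces a^t = b, and s = t a^-1 works. *)
Lemma index2_swapping_involution (gT : finGroupType) (G B K : {group gT}) t :
    B \subset G -> #|G : B| = 2 -> t \in G :\: B -> K <| B -> K \x K :^ t = B ->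
  exists2 s, s \in G :\: B & s * s = 1 /\ K :^ s = K :^ t.
Proof.
move=> sBG iB /setDP [Gt nBt] nKB dB.
have t2B : t ^+ 2 \in B := index2_sqr_mem sBG iB Gt.
have [a [b [Ka Kb eab uniq]]] := mem_dprod dB t2B.
have aB : a \in B := subsetP (normal_sub nKB) a Ka.
have [_ nKtB] := dprod_normal2 dB.
have at2 : a ^ t \in K :^ t by rewrite memJ_conjg.
have bt1 : b ^ t \in K.
  have : b ^ t \in K :^ (t * t) by rewrite conjsgM memJ_conjg.
  by rewrite -expg2 (normP (subsetP (normal_norm nKB) _ t2B)).
have [_ abt] : b ^ t = a /\ a ^ t = b.
  have tt : (t ^+ 2) ^ t = t ^+ 2 by rewrite conjXg conjgE mulKg.
  have [_ _ cKtK _] := dprodP dB.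
  apply: uniq => //; rewrite -{1}tt eab conjMg.
  by apply: (centsP cKtK).
exists (t * a^-1).
  by rewrite inE (groupMr _ (groupVr aB)) nBt (groupMr _ (groupVr (subsetP sBG _ aB))).
split; last by rewrite conjsgM (normP (subsetP (normal_norm nKtB) _ (groupVr aB))).
have -> : t * a^-1 * (t * a^-1) = t ^+ 2 * (a^-1 ^ t) * a^-1.
  by rewrite conjgE expg2 !mulgA mulgK.
by rewrite eab conjVg abt mulgK mulgV.
Qed.

(* The amalgam: G_xy is Bx inside G_x = Gx and Be = f @* Bx inside G_e = Ge;
   K = G_x^[1] is the core of Bx in Gx, K1 = f @* K its copy in Be, and
   K2 = K1 :^ t = G_y^[1] its conjugate by an element t of Ge \ Be. *)
Section Amalgam.
Variables (xT eT : finGroupType) (Gx Bx : {group xT}) (Ge Be : {group eT}).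
Variable f : {morphism Bx >-> eT}.
Hypotheses (sBG : Bx \subset Gx) (sBGe : Be \subset Ge) (injf : 'injm f).
Hypotheses (fB : f @* Bx = Be) (iB : #|Gx : Bx| = 5) (iBe : #|Ge : Be| = 2).
Variable t : eT.
Hypothesis tGe : t \in Ge :\: Be.
Let K := gcore Bx Gx.
Hypotheses (ti : f @* K :&: (f @* K) :^ t = 1) (ntK : K != 1).
Hypothesis isoQ : Gx / K \isog A5.

Let nKG : K <| Gx := gcore_normal sBG.
Let sKB : K \subset Bx := gcore_sub Bx Gx.
Let nKB : K <| Bx := normalS sKB sBG nKG.
Let nGK : Gx \subset 'N(K) := normal_norm nKG.

Let K1 := f @* K.
Let K2 := K1 :^ t.
Let nBeGe : Be <| Ge := index2_normal sBGe iBe.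
Let BeJ : Be :^ t = Be.
Proof. by case/setDP: tGe => Gt _; apply/normP/(subsetP (normal_norm nBeGe)). Qed.
Let nK1 : K1 <| Be. Proof. by rewrite -fB; exact: morphim_normal. Qed.
Let nK2 : K2 <| Be. Proof. by rewrite -BeJ normalJ. Qed.
Let oK1 : #|K1| = #|K|. Proof. exact: card_injm. Qed.
Let oK2 : #|K2| = #|K|. Proof. by rewrite cardJg. Qed.

Lemma card_Bx : #|Bx| = (12 * #|K|)%N.
Proof.
have oGx : #|Gx| = (60 * #|K|)%N.
  rewrite -(Lagrange (normal_sub nKG)) -card_quotient //.
  by rewrite (card_isog isoQ) card_Alt5 mulnC.
have := Lagrange sBG; rewrite iB oGx; lia.
Qed.

(* G_xy / G_x^[1] is a subgroup of order 12 of A_5, hence it is A_4. *)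
Lemma quotient_Bx_isog : Bx / K \isog A4.
Proof.
case/isogP: isoQ => g injg img.
have sBQ : Bx / K \subset Gx / K := quotientS K sBG.
apply: isog_trans (sub_isog sBQ injg) _.
apply: order12_sub_Alt5_isog; first by rewrite -img morphimS.
rewrite card_injm // card_quotient ?(subset_trans sBG nGK) //.
by apply/eqP; rewrite -(eqn_pmul2l (cardG_gt0 K)) Lagrange // card_Bx mulnC.
Qed.

Lemma quotient_Be_isog : Be / K1 \isog A4.
Proof.
have := sub_isog (subxx (Bx / K)) (injm_quotm nKB injf).
by rewrite morphim_quotm fB isog_sym => /isog_trans; apply; exact: quotient_Bx_isog.
Qed.

Let cK12 : K1 \subset 'C(K2) := TI_normal_cents nK1 nK2 ti.

(* G_x = G_x^[1] * C_Gx(G_x^[1]): otherwise simplicity of Gx / K forces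
   C_Gx(K) <= K, so K2, which centralises K1 = f @* K, lies in K1 and
   K2 = K1 :&: K2 = 1, contradicting K <> 1. *)
Lemma core_cent_supplement : K * 'C_Gx(K) = Gx.
Proof.
have nC : 'C_Gx(K) <| Gx by have := subcent_normal Gx K; rewrite (setIidPl nGK).
have nCK : 'C_Gx(K) \subset 'N(K) := subset_trans (subsetIl _ _) nGK.
have simpQ : simple (Gx / K).
  by rewrite (isog_simple isoQ); apply: simple_Alt5; rewrite card_ord.
case/simpleP: simpQ => _ /(_ _ (quotient_normal K nC)) [] eqCQ; last first.
  have := congr1 (fun A => coset K @*^-1 A) eqCQ; rewrite /= !quotientK //.
  by move=> ->; rewrite mulSGid // normal_sub.
have sCK : 'C_Gx(K) \subset K by rewrite -quotient_sub1 // eqCQ.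
have sK21 : K2 \subset K1.
  have : K2 \subset 'C_Be(K1) by rewrite subsetI normal_sub // centsC.
  rewrite -fB -injm_subcent //; move/subset_trans; apply; apply: morphimS.
  by apply: subset_trans sCK; apply: setSI.
have K2_1 : K2 = 1 by rewrite -ti; apply/esym/setIidPr.
by move: ntK; rewrite trivg_card1 -oK2 K2_1 cards1.
Qed.

(* Transporting the supplement to Be along f and conjugation by t. *)
Lemma cent_K2_supplement : K2 * 'C_Be(K2) = Be.
Proof.
have eB : K * 'C_Bx(K) = Bx.
  have := group_modl 'C_Gx(K) sKB; rewrite core_cent_supplement (setIidPr sBG) => e.
  by rewrite -[in RHS]e [in RHS]setIC setIA (setIidPl sBG).
have eBe : K1 * 'C_Be(K1) = Be.
  rewrite -[in RHS]fB; have -> : f @* Bx = f @* (K * 'C_Bx(K)) by rewrite eB.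
  by rewrite morphimMl // injm_subcent // fB.
by rewrite -[in RHS]BeJ -[in RHS]eBe conjsMg conjIg centJ BeJ.
Qed.

(* Be / K1 ~ A_4 is the central product of the images N ~ K2 and M of
   K2 and C_Be(K2); as A_4 is centerless so are N and M, and they meet
   trivially; since N <> 1 and centerless groups of order at most 4 are
   trivial, 12 = |N| |M| forces M = 1 and |K| = |N| = 12. *)
Lemma card_core : #|K| = 12.
Proof.
pose N := K2 / K1; pose M := 'C_Be(K2) / K1.
have nK1B := normal_norm nK1.
have sK2N1 : K2 \subset 'N(K1) := subset_trans (normal_sub nK2) nK1B.
have eNM : Be / K1 = N * M.
  by rewrite -quotientMl // cent_K2_supplement.
have cNM : N \subset 'C(M) by apply: morphim_cents; rewrite centsC subsetIr.
have ZNM : 'Z(N * M) = 1 by rewrite -eNM; exact: center_isog_Alt4 quotient_Be_isog.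
have [tiNM ZN ZM] := centerless_central_product cNM ZNM.
have oN : #|N| = #|K|.
  by rewrite card_quotient // -indexgI setIC ti indexg1 oK2.
have oNM : (#|N| * #|M|)%N = 12.
  by rewrite -TI_cardMg // -eNM (card_isog quotient_Be_isog) card_Alt4.
have N5 : 4 < #|N|.
  by apply: centerless_card_ge5; rewrite // trivg_card1 oN -trivg_card1.
rewrite -oN; have [M1|ntM] := eqVneq M 1.
  by rewrite M1 cards1 muln1 in oNM.
by have := leq_mul N5 (centerless_card_ge5 ZM ntM); rewrite oNM.
Qed.

Lemma Be_dprod : K1 \x K2 = Be.
Proof.
rewrite dprodE ?ti 1?centsC //; apply/eqP.
rewrite eqEcard mul_subG ?normal_sub // TI_cardMg //.
by rewrite oK1 oK2 -fB card_injm // card_Bx card_core.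
Qed.

Lemma core_isog_Alt4 : K \isog A4.
Proof.
have isoK2 : K2 \isog A4.
  exact: isog_trans (sdprod_isog (dprodWsd Be_dprod)) quotient_Be_isog.
apply: isog_trans (sub_isog sKB injf) _.
exact: isog_trans (conj_isog _ t) isoK2.
Qed.

(* G_x = (G_x / K) x K with K ~ A_4 centerless, and G_x / K ~ A_5. *)
Lemma Gx_isog : Gx \isog setX A5 A4.
Proof.
have dGx : K \x 'C_Gx(K) = Gx.
  rewrite dprodE ?subsetIr ?core_cent_supplement // setIA (setIidPl (normal_sub nKG)).
  exact: center_isog_Alt4 core_isog_Alt4.
apply: (isog_dprod (etrans (dprodC _ _) dGx) (setX_dprod _ _)).
  apply: isog_trans (sdprod_isog (dprodWsd dGx)) _.
  exact: isog_trans isoQ (isog_setX1 _ _).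
exact: isog_trans core_isog_Alt4 (isog_set1X _ _).
Qed.

(* G_e = (K1 \x K1^s) ><| <[s]> for an involution s swapping the factors. *)
Lemma Ge_isog : Ge \isog wreathA4C2.
Proof.
have [s Gs [ss K1s]] := index2_swapping_involution sBGe iBe tGe nK1 Be_dprod.
have [os dGe] := index2_sdprod sBGe iBe Gs ss.
have dBe : K1 \x K1 :^ s = Be by rewrite K1s Be_dprod.
apply: (wreath_recognition dBe dGe os (erefl _)).
apply: isog_trans _ core_isog_Alt4; rewrite isog_sym; exact: sub_isog sKB injf.
Qed.

End Amalgam.

Theorem mainTheorem12 (xT eT : finGroupType)
  (Gx Bx : {group xT}) (Ge Be : {group eT}) (f : {morphism Bx >-> eT}) :
  Bx \subset Gx -> Be \subset Ge ->
  'injm f -> f @* Bx = Be ->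
  #|Gx : Bx| = 5 -> #|Ge : Be| = 2 ->
  (* primitivity *)
  (forall L : {group xT}, L \subset Bx -> L <| Gx -> f @* L <| Ge -> L :=: 1) ->
  (* G_xy^[1] = 1 *)
  (exists2 t, t \in Ge :\: Be &
     f @* gcore Bx Gx :&: (f @* gcore Bx Gx) :^ t = 1) ->
  (* G_x^[1] <> 1 *)
  gcore Bx Gx != 1 ->
  (* G_x / G_x^[1] ~= A_5 *)
  Gx / gcore Bx Gx \isog A5 ->
  Gx \isog setX A5 A4 /\ Ge \isog wreathA4C2.
Proof.
move=> sBG sBGe injf fB iB iBe _ [t tGe ti] ntK isoQ.
split; first exact: (Gx_isog sBG sBGe injf fB iB iBe tGe ti ntK isoQ).
exact: (Ge_isog sBG sBGe injf fB iB iBe tGe ti ntK isoQ).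
Qed.
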